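(* For every admissible sequence of bins $\sigma$ and all integers $s',\ell',k\ge 0$ with $2k=s'+2\ell'$, $$R(\sigma,s',\ell')\le \mathrm{OPT}(\sigma,0,k)+(s'+\ell'-k-1)L+M.$$
   Context: Fix an integer $S>1$, $L=2S-1$, $M=4S-3$. Bins have integer sizes in $[S,M]$ and arrive in a sequence $\sigma$, admissible if it ends with at least as many bins of size $M$ as there are items under consideration. A packing assigns every item to a bin with total item size in each bin at most the bin size; its cost is the sum of the sizes of bins receiving at least one item. A packing is valid if each empty bin is smaller than every item packed in a later bin. A bin is wasteful if its empty space is at least the size of some item packed in a later bin; a packing is thrifty if no bin is wasteful. A partial packing of a finite sequence of bins is reasonable if every bin $b$ of that sequence contains: one item of size $S$ if $\mathrm{size}(b)\in[S,L-1]$; one item of size $L$ if $\mathrm{size}(b)=L$; two items of size $S$ or one item of size $L$ if $\mathrm{size}(b)\in[L+1,L+S-1]$; one item of size $S$ and one of size $L$ if $\mathrm{size}(b)=L+S$; three items of size $S$ or one item of size $S$ and one of size $L$ if $\mathrm{size}(b)\in[L+S+1,2L-1]$. The key bin of a packing is the first bin after which no item of size $L$ remains unpacked or at most two items of size $S$ remain unpacked; the front is the restriction of the packing to the prefix ending with the key bin. A packing is reasonable if it is thrifty and its front is reasonable. $\mathrm{OPT}(\sigma,s,\ell)$ is the minimum cost of a valid packing of $s$ items of size $S$ and $\ell$ items of size $L$ into $\sigma$; $R(\sigma,s,\ell)$ is the maximum cost of a reasonable packing of these items into $\sigma$. *)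

From mathcomp Require Import all_boot all_order all_algebra.
Set Implicit Arguments. Unset Strict Implicit. Unset Printing Implicit Defensive.

Definition Lsz (S : nat) : nat := 2 * S - 1.
Definition Msz (S : nat) : nat := 4 * S - 3.

Definition bins_ok (S : nat) (sigma : seq nat) : bool :=
  all (fun b => (S <= b) && (b <= Msz S)) sigma.

Definition admissible (S : nat) (sigma : seq nat) (n : nat) : bool :=
  bins_ok S sigma && (n <= size sigma) &&
  all (fun b => b == Msz S) (drop (size sigma - n) sigma).

(* A packing of s items of size S (items 0..s-1) and l items of size L
   (items s..s+l-1) into the bins of sigma: an assignment of items to bins. *)
Definition packing (sigma : seq nat) (s l : nat) :=
  {ffun 'I_(s + l) -> 'I_(size sigma)}.

Section Packings.
Variables (S : nat) (sigma : seq nat) (s l : nat).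

Definition itemsize (i : 'I_(s + l)) : nat := if i < s then S else Lsz S.

Definition binsize (j : 'I_(size sigma)) : nat := nth 0 sigma j.

Definition load (f : packing sigma s l) (j : 'I_(size sigma)) : nat :=
  \sum_(i | f i == j) itemsize i.

Definition fits (f : packing sigma s l) : bool :=
  [forall j, load f j <= binsize j].

Definition used (f : packing sigma s l) (j : 'I_(size sigma)) : bool :=
  [exists i, f i == j].

Definition cost (f : packing sigma s l) : nat :=
  \sum_(j | used f j) binsize j.

Definition valid (f : packing sigma s l) : bool :=
  fits f &&
  [forall j, ~~ used f j ==>
     [forall i, (j < f i) ==> (binsize j < itemsize i)]].

Definition wasteful (f : packing sigma s l) (j : 'I_(size sigma)) : bool :=
  [exists i, (j < f i) && (itemsize i <= binsize j - load f j)].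

Definition thrifty (f : packing sigma s l) : bool :=
  [forall j, ~~ wasteful f j].

Definition cntS (f : packing sigma s l) (j : 'I_(size sigma)) : nat :=
  #|[pred i : 'I_(s + l) | (i < s) && (f i == j)]|.
Definition cntL (f : packing sigma s l) (j : 'I_(size sigma)) : nat :=
  #|[pred i : 'I_(s + l) | (s <= i) && (f i == j)]|.

Definition bin_reasonable (f : packing sigma s l) (j : 'I_(size sigma)) : bool :=
  let b := binsize j in
  let L := Lsz S in
  let c := (cntS f j, cntL f j) in
  if b < L then c == (1, 0)
  else if b == L then c == (0, 1)
  else if b < L + S then (c == (2, 0)) || (c == (0, 1))
  else if b == L + S then c == (1, 1)
  else (c == (3, 0)) || (c == (1, 1)).

Definition key_cond (f : packing sigma s l) (j : 'I_(size sigma)) : bool :=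
  (#|[pred i : 'I_(s + l) | (s <= i) && (j < f i)]| == 0) ||
  (#|[pred i : 'I_(s + l) | (i < s) && (j < f i)]| <= 2).

(* the front (bins up to and including the key bin, i.e. the first bin
   satisfying key_cond) is reasonable *)
Definition front_reasonable (f : packing sigma s l) : bool :=
  [forall j : 'I_(size sigma), [forall j' : 'I_(size sigma), (j' < j) ==> ~~ key_cond f j']
              ==> bin_reasonable f j].

Definition reasonable (f : packing sigma s l) : bool :=
  fits f && thrifty f && front_reasonable f.

End Packings.

(* The default value
   sumn sigma is an upper bound on the cost of every packing, so it does not
   affect the minimum as soon as a valid packing exists (which is the case
   for admissible sigma). *)
Definition OPT (S : nat) (sigma : seq nat) (s l : nat) : nat :=
  \big[minn/sumn sigma]_(f : packing sigma s l | valid S f) cost f.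

Definition R (S : nat) (sigma : seq nat) (s l : nat) : nat :=
  \max_(f : packing sigma s l | reasonable S f) cost f.

From mathcomp Require Import all_boot all_order all_algebra.
From mathcomp Require Import zify.
Set Implicit Arguments. Unset Strict Implicit. Unset Printing Implicit Defensive.

(* Fix an optimal valid packing g of the k items of size L: since M < 2L, every
   bin of g holds at most one item and has size at least L.  Comparing bin by
   bin, cost f - cost g is at most L (s + l - k), except for an "excess" bin,
   used by f but not by g and strictly larger than L times its number of items,
   which costs at most L - 1 more.  There is at most one excess bin: the bins
   of g all precede it and are used by f, and the weights cntS + 2 cntL of f
   sum to 2k.  Two excess bins would overload the reasonable front, where every
   bin of size at least L has weight at least 2, or else leave more than two
   S-items after the key bin; then no L-item remains after it, so the first
   excess bin holds one S-item with room for another, and thrift forbids the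
   S-item in the second. *)

Lemma leq_card_sum (T : finType) (A : {set T}) (c : nat) (a : T -> nat) :
  (forall j, j \in A -> c <= a j) -> #|A| * c <= \sum_j a j.
Proof.
move=> ca; rewrite -sum_nat_const (big_mkcond (mem A)) /=.
by apply: leq_sum => j _; case: ifP => // /ca.
Qed.

Lemma card_ord_ltn (m n : nat) : m <= n -> #|[pred i : 'I_n | i < m]| = m.
Proof.
move=> le_mn; rewrite -sum1_card -[RHS]card_ord -sum1_card.
by rewrite (big_ord_widen_cond n (fun=> true) (fun=> 1)).
Qed.

Section Counting.
Variables (S : nat) (sigma : seq nat) (s l : nat).
Variable f : packing sigma s l.

Definition cnt (j : 'I_(size sigma)) : nat := #|[pred i | f i == j]|.

Lemma sum_card_bins (P : pred 'I_(s + l)) (A : pred 'I_(size sigma)) :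
  \sum_(j | A j) #|[pred i | P i && (f i == j)]| = #|[pred i | P i && A (f i)]|.
Proof.
rewrite -sum1_card (partition_big f A) /=; last by move=> i /andP[].
apply: eq_bigr => j Aj; rewrite -sum1_card; apply: eq_bigl => i.
by rewrite !inE; case: eqP => [->|]; rewrite ?Aj ?andbT ?andbF.
Qed.

Lemma sum_cntS : \sum_j cntS f j = s.
Proof.
rewrite (sum_card_bins (fun i => i < s) predT) -[RHS](card_ord_ltn (leq_addr l s)).
by apply: eq_card => i; rewrite !inE andbT.
Qed.

Lemma sum_cntL : \sum_j cntL f j = l.
Proof.
rewrite (sum_card_bins (fun i => s <= i) predT).
have := cardC [pred i : 'I_(s + l) | i < s]; rewrite card_ord card_ord_ltn ?leq_addr //.
have -> : #|[predC [pred i : 'I_(s + l) | i < s]]| =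
          #|[pred i : 'I_(s + l) | (s <= i) && predT (f i)]|.
  by apply: eq_card => i; rewrite !inE /= andbT -leqNgt.
by move/addnI.
Qed.

Lemma cntE j : cnt j = cntS f j + cntL f j.
Proof.
rewrite /cnt -(cardID [pred i : 'I_(s + l) | i < s] [pred i | f i == j]).
congr (_ + _); apply: eq_card => i; rewrite !inE /= andbC //.
by rewrite andbC -leqNgt.
Qed.

Lemma sum_cnt : \sum_j cnt j = s + l.
Proof. by rewrite (eq_bigr _ (fun j _ => cntE j)) big_split /= sum_cntS sum_cntL. Qed.

Lemma used_cnt j : used f j = (0 < cnt j).
Proof.
by apply/existsP/card_gt0P => -[i fi]; exists i; rewrite ?inE in fi *.
Qed.

Lemma loadE j : load S f j = cntS f j * S + cntL f j * Lsz S.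
Proof.
rewrite /load (bigID (fun i : 'I_(s + l) => i < s)) /=; congr (_ + _).
  rewrite (eq_bigr (fun=> S)) => [|i /andP[_ lt_is]]; last by rewrite /itemsize lt_is.
  by rewrite sum_nat_const; congr (_ * _); apply: eq_card => i; rewrite !inE andbC.
rewrite (eq_bigr (fun=> Lsz S)) => [|i /andP[_ ge_is]]; last by rewrite /itemsize (negbTE ge_is).
by rewrite sum_nat_const; congr (_ * _); apply: eq_card => i; rewrite !inE andbC leqNgt.
Qed.

End Counting.

Lemma itemsize_le_Lsz (S s l : nat) (i : 'I_(s + l)) : itemsize S i <= Lsz S.
Proof. by rewrite /itemsize /Lsz; case: ifP => _; lia. Qed.

Lemma binsize_bounds (S : nat) (sigma : seq nat) (j : 'I_(size sigma)) :
  bins_ok S sigma -> S <= binsize j <= Msz S.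
Proof. by move/all_nthP; apply; apply: ltn_ord. Qed.

Section PackingProperties.
Variables (S : nat) (sigma : seq nat) (s l : nat).
Variable f : packing sigma s l.
Local Notation L := (Lsz S).

Lemma unused_load0 j : ~~ used f j -> load S f j = 0.
Proof. by rewrite used_cnt cntE loadE -leqNgt leqn0 addn_eq0 => /andP[/eqP-> /eqP->]. Qed.

Lemma valid_used_down (j j' : 'I_(size sigma)) :
  valid S f -> L <= binsize j -> used f j' -> j < j' -> used f j.
Proof.
move=> /andP[_ /forallP/(_ j)] valid_j le_Lj /existsP[i /eqP fi] lt_jj'.
apply: contraTT valid_j => unused_j; rewrite unused_j /= negb_forall.
by apply/existsP; exists i; rewrite fi lt_jj' -leqNgt (leq_trans (itemsize_le_Lsz _ _)).
Qed.

Lemma thrifty_used_down (j j' : 'I_(size sigma)) :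
  thrifty S f -> L <= binsize j -> used f j' -> j < j' -> used f j.
Proof.
move=> /forallP/(_ j) thrifty_j le_Lj /existsP[i /eqP fi] lt_jj'.
apply: contraTT thrifty_j => unused_j; rewrite negbK.
apply/existsP; exists i; rewrite fi lt_jj' unused_load0 // subn0.
exact: leq_trans (itemsize_le_Lsz _ _) le_Lj.
Qed.

Lemma thrifty_after_lone_S (j : 'I_(size sigma)) (i : 'I_(s + l)) :
  thrifty S f -> cntS f j = 1 -> cntL f j = 0 -> L < binsize j ->
  j < f i -> s <= i.
Proof.
move=> /forallP/(_ j)/existsPn/(_ i) + cS cL lt_Lj lt_jfi.
rewrite lt_jfi /= loadE cS cL /itemsize; case: (ltnP i s) => // _.
by move: lt_Lj; rewrite /Lsz; lia.
Qed.

Lemma bin_reasonable_weight j :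
  bin_reasonable S f j -> L <= binsize j -> 2 <= cntS f j + 2 * cntL f j.
Proof.
rewrite /bin_reasonable /= ltnNge => + le_Lj; rewrite le_Lj /=.
move: (cntS f j) (cntL f j) => a b; rewrite !xpair_eqE.
by repeat case: ifP => _; lia.
Qed.

Lemma exists_key_bin : front_reasonable S f -> 0 < size sigma ->
  exists t, key_cond f t /\ forall j : 'I_(size sigma), j <= t -> bin_reasonable S f j.
Proof.
move=> front n_gt0; have lt_last : (size sigma).-1 < size sigma by rewrite ltn_predL.
have key_last : key_cond f (Ordinal lt_last).
  apply/orP; left; apply/eqP/eq_card0 => i; rewrite !inE /=.
  by have := ltn_ord (f i); lia.
case: (arg_minnP (fun j : 'I_(size sigma) => nat_of_ord j) key_last) => t key_t t_min.
exists t; split=> // j le_jt; apply: (implyP (forallP front j)).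
apply/forallP => j'; apply/implyP => lt_j'j; apply/negP => /t_min.
by rewrite leqNgt (leq_trans lt_j'j le_jt).
Qed.

End PackingProperties.

Section LargeItemPacking.
Variables (S : nat) (sigma : seq nat) (k : nat).
Hypotheses (S_gt0 : 0 < S) (ok : bins_ok S sigma).
Variable g : packing sigma 0 k.
Hypothesis g_valid : valid S g.
Local Notation L := (Lsz S).

Lemma large_load j : load S g j = cnt g j * L.
Proof.
rewrite loadE cntE; suff -> : cntS g j = 0 by [].
by apply: eq_card0 => i; rewrite !inE ltn0.
Qed.

Lemma large_cnt_le1 j : cnt g j <= 1.
Proof.
have := forallP (andP g_valid).1 j; rewrite large_load.
have := binsize_bounds j ok; rewrite /Lsz /Msz; nia.
Qed.

Lemma large_used_binsize j : used g j -> L <= binsize j.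
Proof.
rewrite used_cnt => cnt_gt0; have := forallP (andP g_valid).1 j.
by rewrite large_load; apply: leq_trans; rewrite leq_pmull.
Qed.

Lemma card_large_used : #|[set j | used g j]| = k.
Proof.
rewrite -sum1_card -[RHS]add0n -(sum_cnt g) big_mkcond /=.
apply: eq_bigr => j _; rewrite inE used_cnt.
by have := large_cnt_le1 j; case: (cnt g j) => [|[]].
Qed.

End LargeItemPacking.

Section ExcessBins.
Variables (S : nat) (sigma : seq nat) (s l k : nat).
Hypotheses (S_gt0 : 0 < S) (ok : bins_ok S sigma) (weight_k : 2 * k = s + 2 * l).
Variables (g : packing sigma 0 k) (f : packing sigma s l).
Hypotheses (g_valid : valid S g) (f_reasonable : reasonable S f).
Local Notation L := (Lsz S).

Let f_thrifty : thrifty S f. Proof. by case/andP: f_reasonable => /andP[]. Qed.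

Definition excess_bin j := [&& used f j, ~~ used g j & L * cnt f j < binsize j].

Lemma cost_bin_le j :
  (if used f j then binsize j else 0) + (if used g j then L else 0) <=
  (if used g j then binsize j else 0) + L * cnt f j + (if excess_bin j then L - 1 else 0).
Proof.
have := binsize_bounds j ok; rewrite /excess_bin (used_cnt f) /Msz.
case used_gj: (used g j) => /=; rewrite ?andbF.
  by have := large_used_binsize g_valid used_gj; case: (cnt f j) => [|c] /=; nia.
by case: (cnt f j) => [|c] //=; case: ltnP; rewrite /Lsz; nia.
Qed.

Lemma cost_le_excess :
  cost f + L * k <= cost g + L * (s + l) + #|[set j | excess_bin j]| * (L - 1).
Proof.
rewrite /cost !(big_mkcond (used _)) -[k in L * k](card_large_used S_gt0 ok g_valid).
rewrite mulnC -!sum_nat_const -(sum_cnt f) big_distrr /=.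
rewrite !(big_mkcond (fun j => j \in _)) -!big_split.
by apply: leq_sum => j _; rewrite !inE cost_bin_le.
Qed.

Lemma excess_binP j :
  excess_bin j -> [/\ used f j, ~~ used g j, cnt f j = 1 & L < binsize j].
Proof.
case/and3P=> used_fj unused_gj lt_cnt_b.
have cnt1 : cnt f j = 1.
  have := binsize_bounds j ok; move: lt_cnt_b used_fj; rewrite used_cnt /Msz /Lsz.
  by case: (cnt f j) => [|[|c]] //; nia.
by split; rewrite // -[L]muln1 -cnt1.
Qed.

Lemma large_used_before_excess j j1 : excess_bin j1 -> used g j -> j < j1.
Proof.
case/excess_binP=> _ unused_gj1 _ lt_Lj1 used_gj; rewrite ltnNge leq_eqVlt.
apply/negP => /orP[/eqP/val_inj eq_j1j | lt_j1j].
  by rewrite eq_j1j used_gj in unused_gj1.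
by rewrite (valid_used_down g_valid (ltnW lt_Lj1) used_gj lt_j1j) in unused_gj1.
Qed.

Lemma weight_sum : \sum_j (cntS f j + 2 * cntL f j) = 2 * k.
Proof. by rewrite big_split /= -big_distrr sum_cntS sum_cntL. Qed.

Lemma front_weight_bound (t : 'I_(size sigma)) (X : {set 'I_(size sigma)}) :
  (forall j : 'I_(size sigma), j <= t -> bin_reasonable S f j) ->
  (forall j, j \in X -> (j <= t) && (L <= binsize j)) -> #|X| * 2 <= 2 * k.
Proof.
move=> front inX; rewrite -weight_sum; apply: leq_card_sum => j /inX /andP[le_jt le_Lj].
exact: bin_reasonable_weight (front j le_jt) le_Lj.
Qed.

Lemma weight_bound_after (t : 'I_(size sigma)) (X : {set 'I_(size sigma)}) :
  (forall j : 'I_(size sigma), j <= t -> bin_reasonable S f j) ->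
  (forall j, j \in X -> used f j && (L <= binsize j)) ->
  #|X| * 2 <= 2 * k + #|[pred i : 'I_(s + l) | (i < s) && (t < f i)]|.
Proof.
move=> front inX; rewrite -weight_sum -(sum_card_bins f (fun i => i < s) (fun j => t < j)).
rewrite [X in _ + X]big_mkcond -big_split /=.
apply: leq_card_sum => j /inX /andP[used_fj le_Lj]; case: (leqP j t) => [le_jt|_].
  by rewrite addn0 (bin_reasonable_weight (front j le_jt) le_Lj).
by move: used_fj; rewrite used_cnt cntE -/(cntS f j); lia.
Qed.

Let large_used_set_card j1 : ~~ used g j1 -> #|j1 |: [set j | used g j]| = k.+1.
Proof.
by move=> unused_gj1; rewrite cardsU1 inE unused_gj1 (card_large_used S_gt0 ok g_valid).
Qed.

Lemma excess_after_front (t j1 : 'I_(size sigma)) :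
  (forall j : 'I_(size sigma), j <= t -> bin_reasonable S f j) ->
  excess_bin j1 -> t < j1.
Proof.
move=> front ex1; have [_ unused_gj1 _ lt_Lj1] := excess_binP ex1.
rewrite ltnNge; apply/negP => le_j1t.
suff : #|j1 |: [set j | used g j]| * 2 <= 2 * k by rewrite large_used_set_card; lia.
apply: front_weight_bound front _ => j; rewrite !inE => /orP[/eqP-> | used_gj].
  by rewrite le_j1t ltnW.
rewrite (large_used_binsize g_valid used_gj) andbT.
exact: ltnW (leq_trans (large_used_before_excess ex1 used_gj) le_j1t).
Qed.

Lemma no_two_excess_bins (j1 j2 : 'I_(size sigma)) :
  j1 < j2 -> excess_bin j1 -> excess_bin j2 -> False.
Proof.
move=> lt_j12 ex1 ex2.
have [used_fj1 unused_gj1 cnt_j1 lt_Lj1] := excess_binP ex1.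
have [used_fj2 unused_gj2 _ lt_Lj2] := excess_binP ex2.
have [t [key_t front]] :=
  exists_key_bin (andP f_reasonable).2 (leq_ltn_trans (leq0n _) (ltn_ord j1)).
have lt_tj1 := excess_after_front front ex1.
have many_S : 2 < #|[pred i : 'I_(s + l) | (i < s) && (t < f i)]|.
  set X := j2 |: (j1 |: [set j | used g j]).
  have card_X : #|X| = k.+2.
    rewrite cardsU1 large_used_set_card // !inE negb_or unused_gj2 andbT.
    by rewrite -val_eqE /= neq_ltn lt_j12 orbT.
  suff : #|X| * 2 <= 2 * k + #|[pred i : 'I_(s + l) | (i < s) && (t < f i)]|.
    by rewrite card_X mulnC !mulnSr -!addnA !leq_add2l => le4; apply: leq_trans le4.
  apply: weight_bound_after front _ => j; rewrite !inE => /or3P[/eqP-> | /eqP-> | used_gj].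
  - by rewrite used_fj2 ltnW.
  - by rewrite used_fj1 ltnW.
  have le_Lj := large_used_binsize g_valid used_gj.
  by rewrite le_Lj (thrifty_used_down f_thrifty le_Lj used_fj1) ?large_used_before_excess.
have L_before_t (i : 'I_(s + l)) : s <= i -> f i <= t.
  move: key_t; rewrite /key_cond leqNgt many_S orbF => /eqP/card0_eq/(_ i).
  by rewrite !inE => /negbT; rewrite negb_and -leqNgt => /orP[/negP|].
have cntL_j1 : cntL f j1 = 0.
  apply: eq_card0 => i; rewrite !inE; apply/negP => /andP[/L_before_t + /eqP fi].
  by rewrite fi leqNgt lt_tj1.
have cntS_j1 : cntS f j1 = 1 by rewrite -cnt_j1 cntE cntL_j1 addn0.
case/existsP: used_fj2 => i /eqP fi.
have L_i : s <= i.
  by apply: thrifty_after_lone_S f_thrifty cntS_j1 cntL_j1 lt_Lj1 _; rewrite fi.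
by have := L_before_t i L_i; rewrite fi leqNgt (ltn_trans lt_tj1 lt_j12).
Qed.

Lemma card_excess_le1 : #|[set j | excess_bin j]| <= 1.
Proof.
apply/card_le1_eqP => j1 j2; rewrite !inE => ex1 ex2.
case: (ltngtP j1 j2) => [lt_j12 | lt_j21 | /val_inj //].
  by case: (no_two_excess_bins lt_j12 ex1 ex2).
by case: (no_two_excess_bins lt_j21 ex2 ex1).
Qed.

Lemma reasonable_cost_bound : cost f <= cost g + (s + l - k) * L + (L - 1).
Proof.
have le_excess : #|[set j | excess_bin j]| * (L - 1) <= L - 1.
  by have := card_excess_le1; case: #|_| => [|[]] //; rewrite mul1n.
have split_sl : L * (s + l) = L * k + (s + l - k) * L.
  by rewrite mulnC [L * k]mulnC -mulnDl subnKC //; lia.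
move: cost_le_excess le_excess; rewrite split_sl.
move: (L * k) ((s + l - k) * L) (#|_| * _) => a b c; lia.
Qed.

End ExcessBins.

Lemma cost_le_sumn (sigma : seq nat) (s l : nat) (f : packing sigma s l) :
  cost f <= sumn sigma.
Proof.
rewrite /cost sumnE (big_nth 0) big_mkord big_mkcond /=.
by apply: leq_sum => j _; case: (used f j).
Qed.

Lemma R_le_OPT (S : nat) (sigma : seq nat) (s l k : nat) :
  0 < S -> bins_ok S sigma -> 2 * k = s + 2 * l ->
  R S sigma s l <= OPT S sigma 0 k + (s + l - k) * Lsz S + (Lsz S - 1).
Proof.
move=> S_gt0 ok weight_k; apply/bigmax_leqP => f f_reasonable.
apply: (big_ind (fun x => cost f <= x + _ + _)).
- by rewrite -addnA (leq_trans (cost_le_sumn f)) ?leq_addr.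
- by move=> x y; case: (leqP x y).
- by move=> g g_valid; apply: reasonable_cost_bound.
Qed.

Unset Implicit Arguments.
Import GRing.Theory Num.Theory.

Theorem lemma6 (S : nat) (HS : 1 < S) (sigma : seq nat) (s' l' k : nat)
  (Hadm : admissible S sigma (s' + l'))
  (Hk : 2 * k = s' + 2 * l') :
  ((R S sigma s' l')%:Z <=
     (OPT S sigma 0 k)%:Z
     + ((s' + l')%:Z - k%:Z - 1) * (Lsz S)%:Z + (Msz S)%:Z)%R.
Proof.
have ok : bins_ok S sigma by case/andP: Hadm => /andP[].
have := R_le_OPT (ltnW HS) ok Hk.
have le_ks : k <= s' + l' by lia.
have -> : Msz S = Lsz S + (Lsz S - 1) by rewrite /Msz /Lsz; lia.
have -> : ((s' + l')%:Z = (s' + l' - k)%:Z + k%:Z)%R by rewrite -PoszD subnK.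
rewrite addrK mulrBl mul1r -PoszM.
move: (R S sigma s' l') (OPT S sigma 0 k) ((s' + l' - k) * Lsz S) (Lsz S) => r o x L.
lia.
Qed.
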